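(* Let $X$ be an infinite compact metrizable space, $h\colon X\to X$ a minimal homeomorphism, and suppose $(X,h)$ has the topological small boundary property. Let $\varepsilon>0$. (1) For any open $U\subset X$ with $\partial U$ universally null, there is an open $V\subset X$ with $\overline{V}\subset U$, $\partial V$ topologically $h$-small, and $\mu(U\setminus\overline{V})<\varepsilon$ for all $\mu\in M_h(X)$. (2) For any open $U\subset X$ and any closed $F\subset U$ with $\partial F$ universally null, there is an open $V\subset X$ with $F\subset V\subset\overline{V}\subset U$, $\partial V$ topologically $h$-small, and $\mu(V\setminus F)<\varepsilon$ for all $\mu\in M_h(X)$. (3) For any closed $F\subset X$ with $\partial F$ universally null, there is an open $V\subset X$ with $F\subset V$, $\partial V$ topologically $h$-small, and $\mu(V\setminus F)<\varepsilon$ for all $\mu\in M_h(X)$.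
   Context: $M_h(X)$ denotes the set of $h$-invariant Borel probability measures on $X$; a Borel set is universally null if it has measure $0$ for all $\mu\in M_h(X)$; $\partial A$ is the boundary of $A$. A closed set $F\subset X$ is topologically $h$-small if there is $m\in\mathbb{Z}_{+}$ such that whenever $d(0),\dots,d(m)$ are $m+1$ distinct integers, $h^{d(0)}(F)\cap\cdots\cap h^{d(m)}(F)=\varnothing$. $(X,h)$ has the topological small boundary property if whenever $F,K\subset X$ are disjoint compact sets, there exist open sets $U,V\subset X$ with $F\subset U$, $K\subset V$, $\overline{U}\cap\overline{V}=\varnothing$ and $\partial U$ topologically $h$-small. *)

From HB Require Import structures.
From mathcomp Require Import all_boot all_order all_algebra.
From mathcomp Require Import all_classical all_reals all_analysis.
Set Implicit Arguments. Unset Strict Implicit. Unset Printing Implicit Defensive.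
Import Order.TTheory GRing.Theory Num.Theory.
Local Open Scope classical_set_scope.
Local Open Scope ring_scope.

Notation borel X := (g_sigma_algebraType (@open X%type)).

Definition boundary (X : ptopologicalType) (A : set X) : set X :=
  closure A `\` interior A.

Definition zpow (X : Type) (h g : X -> X) (n : int) : X -> X :=
  match n with
  | Posz k => iter k h
  | Negz k => iter k.+1 g
  end.

Definition is_homeo (X : ptopologicalType) (h g : X -> X) : Prop :=
  cancel h g /\ cancel g h /\ continuous h /\ continuous g.

Definition minimal_homeo (X : ptopologicalType) (h g : X -> X) : Prop :=
  forall x : X, closure [set zpow h g n x | n in [set: int]] = [set: X].

Definition invariant_prob (R : realType) (X : ptopologicalType) (h : X -> X)
    (mu : probability (borel X) R) : Prop :=
  forall A : set (borel X), measurable A -> mu (h @^-1` A) = mu A.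

Definition universally_null (R : realType) (X : ptopologicalType) (h : X -> X)
    (A : set X) : Prop :=
  measurable (A : set (borel X)) /\
  forall mu : probability (borel X) R, invariant_prob h mu -> mu A = 0%E.

Definition topo_small (X : ptopologicalType) (h g : X -> X) (F : set X) : Prop :=
  closed F /\
  exists m : nat, forall d : 'I_m.+1 -> int, injective d ->
    \bigcap_(i in [set: 'I_m.+1]) (zpow h g (d i) @` F) = set0.

Definition TSBP (X : ptopologicalType) (h g : X -> X) : Prop :=
  forall F K : set X, compact F -> compact K -> F `&` K = set0 ->
    exists U V : set X, [/\ open U /\ open V, F `<=` U, K `<=` V,
      closure U `&` closure V = set0 & topo_small h g (boundary U)].

From HB Require Import structures.
From mathcomp Require Import all_boot all_order all_algebra.
From mathcomp Require Import all_classical all_reals all_analysis.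
From mathcomp Require Import lra.
Import Order.TTheory GRing.Theory Num.Theory.
Import numFieldNormedType.Exports.
Local Open Scope classical_set_scope.
Local Open Scope ring_scope.
Set Implicit Arguments. Unset Strict Implicit. Unset Printing Implicit Defensive.

(* Everything rests on one fact: a closed universally null set C has open
   neighbourhoods W with mu(W) < eps uniformly in mu in M_h(X).  Otherwise,
   choosing for every open W containing C an invariant mu_W with
   mu_W(W) >= eps, the functions A |-> mu_W(A) have a cluster point l (by
   Tychonoff) along the neighbourhoods of C; on closed sets l is a finitely
   additive, h-invariant content, and its outer-regular extension is an
   invariant Borel probability measure of C-mass >= eps, which is absurd.
   Given such a W around the boundary, the small boundary property separates
   the relevant closed set from the complement of the target open set by an
   open V with h-small boundary, and the error set lies inside W. *)

Section closed_content.
Context (R : realType) (X : ptopologicalType).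
Hypothesis X_compact : compact [set: X].
Variable L : set X -> R.
Hypothesis L_monotone : forall A B, closed A -> closed B -> A `<=` B -> L A <= L B.
Hypothesis L_additive : forall A B, closed A -> closed B -> A `&` B = set0 ->
  L (A `|` B) = L A + L B.
Hypothesis L_subadditive : forall A B, closed A -> closed B ->
  L (A `|` B) <= L A + L B.
Hypothesis L_setT : L setT = 1.
(* A form of normality of X; it makes [inner_content] countably subadditive. *)
Hypothesis closed_split : forall K W1 W2 : set X, closed K -> open W1 -> open W2 ->
  K `<=` W1 `|` W2 -> exists K1 K2 : set X, [/\ closed K1, closed K2,
    K1 `<=` W1, K2 `<=` W2 & K = K1 `|` K2].

Lemma L_set0 : L set0 = 0.
Proof.
have := L_additive (@closed0 X) (@closed0 X) (setI0 set0).
by rewrite setU0 => ?; lra.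
Qed.

Local Open Scope ereal_scope.

Definition inner_content (W : set X) : \bar R :=
  ereal_sup [set (L K)%:E | K in [set K | closed K /\ K `<=` W]].

Definition outer_content (A : set X) : \bar R :=
  ereal_inf [set inner_content W | W in [set W | open W /\ A `<=` W]].

Lemma content_le_inner W K : closed K -> K `<=` W -> (L K)%:E <= inner_content W.
Proof. by move=> cK KW; apply: ereal_sup_ubound; exists K. Qed.

Lemma inner_content_le W M :
  (forall K, closed K -> K `<=` W -> (L K)%:E <= M) -> inner_content W <= M.
Proof. by move=> H; apply: ge_ereal_sup => _ [K [cK KW] <-]; exact: H. Qed.

Lemma inner_content_ge0 W : 0 <= inner_content W.
Proof. by apply: le_trans (content_le_inner closed0 (sub0set W)); rewrite L_set0. Qed.

Lemma inner_content_le1 W : inner_content W <= 1.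
Proof. by apply: inner_content_le => K cK _; rewrite lee_fin -L_setT L_monotone. Qed.

Lemma le_inner_content : {homo inner_content : A B / A `<=` B >-> A <= B}.
Proof.
move=> A B AB; apply: inner_content_le => K cK KA.
exact: content_le_inner (subset_trans KA AB).
Qed.

Lemma inner_content0 : inner_content set0 = 0.
Proof.
apply/eqP; rewrite eq_le inner_content_ge0 andbT.
by apply: inner_content_le => K _; rewrite subset0 => ->; rewrite L_set0.
Qed.

Lemma inner_contentT : inner_content setT = 1.
Proof.
apply/eqP; rewrite eq_le inner_content_le1 /= -L_setT.
exact: content_le_inner closedT _.
Qed.

Lemma outer_content_le_inner A W :
  open W -> A `<=` W -> outer_content A <= inner_content W.
Proof. by move=> oW AW; apply: ereal_inf_lbound; exists W. Qed.

Lemma outer_content_ge A M :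
  (forall W, open W -> A `<=` W -> M <= inner_content W) -> M <= outer_content A.
Proof. by move=> H; apply: le_ereal_inf_tmp => _ [W [oW AW] <-]; exact: H. Qed.

Lemma outer_content_ge0 A : 0 <= outer_content A.
Proof. by apply: outer_content_ge => W _ _; exact: inner_content_ge0. Qed.

Lemma outer_content_le1 A : outer_content A <= 1.
Proof. by rewrite -inner_contentT outer_content_le_inner //; exact: openT. Qed.

Lemma le_outer_content : {homo outer_content : A B / A `<=` B >-> A <= B}.
Proof.
move=> A B AB; apply: outer_content_ge => W oW BW.
exact: outer_content_le_inner (subset_trans AB BW).
Qed.

Lemma outer_content_open W : open W -> outer_content W = inner_content W.
Proof.
move=> oW; apply/eqP; rewrite eq_le outer_content_le_inner //=.
by apply: outer_content_ge => W' _; exact: le_inner_content.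
Qed.

Lemma outer_content0 : outer_content set0 = 0.
Proof. by rewrite outer_content_open ?inner_content0 //; exact: open0. Qed.

Lemma outer_contentT : outer_content setT = 1.
Proof. by rewrite outer_content_open ?inner_contentT //; exact: openT. Qed.

Lemma outer_content_fin_num A : outer_content A \is a fin_num.
Proof.
rewrite ge0_fin_numE ?outer_content_ge0 //.
exact: le_lt_trans (outer_content_le1 A) (ltry _).
Qed.

Lemma inner_content_bigsetU (W : nat -> set X) n : (forall i, open (W i)) ->
  forall K, closed K -> K `<=` \big[setU/set0]_(i < n) W i ->
  (L K)%:E <= \sum_(i < n) inner_content (W i).
Proof.
move=> oW; elim: n => [|n IH] K cK.
  by rewrite !big_ord0 subset0 => ->; rewrite L_set0.
rewrite !big_ord_recr /= => KW.
have oWn : open (\big[setU/set0]_(i < n) W i).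
  by rewrite -bigcup_mkord; apply: bigcup_open => i _.
have [K1 [K2 [cK1 cK2 K1W K2W ->]]] := closed_split cK oWn (oW n) KW.
apply: le_trans (leeD (IH _ cK1 K1W) (content_le_inner cK2 K2W)).
by rewrite -EFinD lee_fin L_subadditive.
Qed.

Lemma inner_content_bigcup (W : nat -> set X) : (forall i, open (W i)) ->
  inner_content (\bigcup_i W i) <= \sum_(0 <= i <oo) inner_content (W i).
Proof.
move=> oW; apply: inner_content_le => K cK KW.
have : compact K := subclosed_compact cK X_compact (subsetT K).
rewrite compact_cover => /(_ nat setT W) [i _|x /KW [i _ Wix]|D _ KD].
- exact: oW.
- by exists i.
pose n := (\max_(i <- finmap.enum_fset D) i).+1.
have KWn : K `<=` \big[setU/set0]_(i < n) W i.
  move=> x /KD [i Di Wix]; rewrite -bigcup_mkord; exists i => //=.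
  by rewrite ltnS; apply: (@leq_bigmax_seq _ _ xpredT id).
apply: le_trans (inner_content_bigsetU oW cK KWn) _.
rewrite -(big_mkord xpredT (fun i => inner_content (W i))).
by apply: nneseries_lim_ge => k _ _; exact: inner_content_ge0.
Qed.

Lemma outer_content_sigma_subadditive : sigma_subadditive outer_content.
Proof.
move=> A; apply/lee_addgt0Pr => _ /posnumP[e].
rewrite (le_trans _ (epsilon_trick _ _ _))//; last by move=> n; exact: outer_content_ge0.
have [W HW] : {W : nat -> set X & forall n, [/\ open (W n), A n `<=` W n &
    inner_content (W n) <= outer_content (A n) + (e%:num / (2 ^ n.+1)%:R)%:E]}.
  apply: (@choice _ _ (fun n W => [/\ open W, A n `<=` W &
    inner_content W <= outer_content (A n) + (e%:num / (2 ^ n.+1)%:R)%:E])) => n.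
  have en : (0 < e%:num / (2 ^ n.+1)%:R)%R by [].
  have [_ [V [oV AV] <-] Vlt] := lb_ereal_inf_adherent en (outer_content_fin_num (A n)).
  by exists V; split => //; exact: ltW.
have oW i : open (W i) by case: (HW i).
apply: (@le_trans _ _ (inner_content (\bigcup_i W i))).
  apply: outer_content_le_inner; first by apply: bigcup_open => i _.
  by move=> x [i _ Aix]; exists i => //; case: (HW i) => _ + _; apply.
apply: le_trans (inner_content_bigcup oW) _.
apply: lee_nneseries => [i _ _|i _]; first exact: inner_content_ge0.
by case: (HW i).
Qed.

HB.instance Definition _ := isOuterMeasure.Build R X outer_content
  outer_content0 outer_content_ge0 le_outer_content outer_content_sigma_subadditive.

Lemma content_add_inner_le W K : open W -> closed K -> K `<=` W ->
  (L K)%:E + inner_content (W `&` ~` K) <= inner_content W.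
Proof.
move=> oW cK KW; rewrite addeC -leeBrDr //.
apply: inner_content_le => K' cK' K'W; rewrite leeBrDl // -EFinD -L_additive //.
- by apply: content_le_inner; [exact: closedU|move=> x [/KW|/K'W []]].
- by apply/seteqP; split => x // [Kx /K'W []].
Qed.

Lemma caratheodory_inner_open W A : open W -> open A ->
  inner_content (W `&` A) + outer_content (W `&` ~` A) <= inner_content W.
Proof.
move=> oW oA; rewrite -leeBrDr ?outer_content_fin_num //.
apply: inner_content_le => K cK KWA; rewrite leeBrDr ?outer_content_fin_num //.
apply: le_trans (content_add_inner_le oW cK (fun x Kx => (KWA x Kx).1)).
apply: leeD => //; apply: outer_content_le_inner; first by apply: openI; rewrite ?openC.
by move=> x [Wx nAx]; split => // /KWA [].
Qed.

Lemma caratheodory_measurable_open A : open A ->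
  caratheodory_measurable outer_content A.
Proof.
move=> oA; apply: le_caratheodory_measurable => Y.
apply: outer_content_ge => W oW YW.
apply: le_trans (caratheodory_inner_open oW oA); apply: leeD.
  by apply: outer_content_le_inner; [exact: openI|exact: setSI].
by apply: le_outer_content; exact: setSI.
Qed.

Lemma caratheodory_measurable_borel (A : set (borel X)) : measurable A ->
  caratheodory_measurable outer_content A.
Proof.
apply: smallest_sub => [|W]; last exact: caratheodory_measurable_open.
split.
- exact: caratheodory_measurable_set0.
- by move=> B cB; rewrite setTD; exact: caratheodory_measurable_setC.
- by move=> F cF; exact: caratheodory_measurable_bigcup.
Qed.

Definition content_measure : set (borel X) -> \bar R := outer_content.

Lemma content_measure_sigma_additive : semi_sigma_additive content_measure.
Proof.
move=> F mF tF mU; apply: caratheodory_measure_sigma_additive => //.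
- by move=> i; exact: caratheodory_measurable_borel.
- exact: caratheodory_measurable_borel.
Qed.

HB.instance Definition _ := isMeasure.Build _ _ _ content_measure
  outer_content0 outer_content_ge0 content_measure_sigma_additive.
HB.instance Definition _ :=
  Measure_isProbability.Build _ _ _ content_measure outer_contentT.

Definition content_prob : probability (borel X) R := content_measure.

Lemma content_probE (A : set X) : content_prob A = outer_content A.
Proof. by []. Qed.

Lemma content_prob_ge (A : set X) c :
  (forall W, open W -> A `<=` W -> exists2 K, closed K /\ K `<=` W & (c <= L K)%R) ->
  c%:E <= content_prob A.
Proof.
move=> H; rewrite content_probE; apply: outer_content_ge => W oW AW.
have [K [cK KW] cLK] := H W oW AW.
by apply: le_trans (content_le_inner cK KW); rewrite lee_fin.
Qed.

Section invariance.
Variables h g : X -> X.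
Hypothesis hom : is_homeo h g.
Hypothesis L_preimage : forall K, closed K -> L (h @^-1` K) = L K.

Lemma preimage_homeoK (A : set X) : h @^-1` (g @^-1` A) = A.
Proof. by case: hom => hK _; apply/seteqP; split => x /=; rewrite hK. Qed.

Lemma inner_content_preimage W : inner_content (h @^-1` W) = inner_content W.
Proof.
have [_ [gK [hc gc]]] := hom.
apply/eqP; rewrite eq_le; apply/andP; split; apply: inner_content_le => K cK KW.
- have cgK : closed (g @^-1` K) by apply: preimage_closed => // x _; exact: gc.
  rewrite -[K]preimage_homeoK L_preimage //; apply: content_le_inner => // y /= Ky.
  by have := KW _ Ky; rewrite /= gK.
- have chK : closed (h @^-1` K) by apply: preimage_closed => // x _; exact: hc.
  by rewrite -L_preimage //; apply: content_le_inner => // x /KW.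
Qed.

Lemma content_prob_invariant : invariant_prob h content_prob.
Proof.
have [_ [gK [hc gc]]] := hom.
move=> A _; rewrite !content_probE; apply/eqP; rewrite eq_le; apply/andP; split.
- apply: outer_content_ge => W oW AW; rewrite -inner_content_preimage.
  apply: outer_content_le_inner; first exact: (proj1 (continuousP h) hc).
  by move=> x /AW.
- apply: outer_content_ge => W oW AW.
  rewrite -[W]preimage_homeoK inner_content_preimage; apply: outer_content_le_inner.
    exact: (proj1 (continuousP g) gc).
  by move=> x Ax; apply: AW; rewrite /= gK.
Qed.
End invariance.
End closed_content.

Section cluster_point.
Context (R : realType) (T : eqType) (I : Type) (F : set_system I) {FF : ProperFilter F}.
Variable f : I -> T -> R.
Local Notation RT := (@prod_topology T (fun=> R)).

Lemma cluster_point_exists : (forall i t, 0 <= f i t <= 1) ->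
  exists l : RT, cluster ((f : I -> RT) @ F) l.
Proof.
move=> f01.
have : compact [set g : RT | forall t, `[0, 1]%classic (g t)].
  exact: tychonoff (fun=> @segment_compact R 0 1).
move=> /(_ ((f : I -> RT) @ F) _ _) [].
- by apply: (@filterE I F) => i t /=; rewrite in_itv /=; exact: f01.
- by move=> l [_ cl]; exists l.
Qed.

Lemma continuous_sum_coord (s : seq T) : continuous (fun g : RT => \sum_(a <- s) g a).
Proof.
elim: s => [|a s IH].
  have -> : (fun g : RT => \sum_(b <- [::]) g b) = cst 0.
    by apply/funext => g; rewrite big_nil.
  exact: cst_continuous.
have -> : (fun g : RT => \sum_(b <- a :: s) g b) =
    (fun g : RT => g a) + (fun g : RT => \sum_(b <- s) g b).
  by apply/funext => g; rewrite big_cons.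
by move=> g; apply: continuousD; [exact: proj_continuous|exact: IH].
Qed.

Lemma cluster_closed (S : set RT) (l : RT) : cluster ((f : I -> RT) @ F) l ->
  closed S -> (\forall i \near F, S (f i)) -> S l.
Proof. by rewrite clusterE => cl cS FS; rewrite (closure_id S).1 //; exact: cl. Qed.

Lemma cluster_sum_ge (l : RT) (s t : seq T) c : cluster ((f : I -> RT) @ F) l ->
  (\forall i \near F, c <= \sum_(a <- s) f i a - \sum_(b <- t) f i b) ->
  c <= \sum_(a <- s) l a - \sum_(b <- t) l b.
Proof.
move=> cl; apply: (cluster_closed (S := [set g | c <= _]) cl).
apply: (preimage_closed (f := fun g : RT => _ - _) (D := [set x | c <= x])).
  by move=> g _; apply: continuousB; exact: continuous_sum_coord.
exact: closed_ge.
Qed.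

Lemma cluster_sum_eq (l : RT) (s t : seq T) c : cluster ((f : I -> RT) @ F) l ->
  (\forall i \near F, \sum_(a <- s) f i a - \sum_(b <- t) f i b = c) ->
  \sum_(a <- s) l a - \sum_(b <- t) l b = c.
Proof.
move=> cl; apply: (cluster_closed (S := [set g | _ = c]) cl).
apply: (preimage_closed (f := fun g : RT => _ - _) (D := [set x | x = c])).
  by move=> g _; apply: continuousB; exact: continuous_sum_coord.
exact: closed_eq.
Qed.
End cluster_point.

Section borel_probability.
Context (R : realType) (X : ptopologicalType).

Lemma open_measurable_borel (A : set X) : open A -> measurable (A : set (borel X)).
Proof. by move=> oA; apply: sub_sigma_algebra. Qed.

Lemma closed_measurable_borel (A : set X) : closed A -> measurable (A : set (borel X)).
Proof.
move=> cA; rewrite -(setCK A); apply: measurableC.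
by apply: open_measurable_borel; rewrite openC.
Qed.

Lemma open_setD_closed_measurable (U F : set X) : open U -> closed F ->
  measurable (U `\` F : set (borel X)).
Proof.
move=> oU cF; rewrite setDE; apply: measurableI; first exact: open_measurable_borel.
by apply: measurableC; exact: closed_measurable_borel.
Qed.

Lemma le_prob (mu : probability (borel X) R) (A B : set (borel X)) :
  measurable A -> measurable B -> A `<=` B -> (mu A <= mu B)%E.
Proof. by move=> mA mB; apply: le_measure; rewrite inE. Qed.

(* The value [0] off the Borel sets only serves to keep every value in [0, 1]. *)
Definition prob_values (mu : probability (borel X) R) (A : set X) : R :=
  if `[< measurable (A : set (borel X)) >] then fine (mu A) else 0.

Lemma prob_values01 mu A : 0 <= prob_values mu A <= 1.
Proof.
rewrite /prob_values; case: ifPn => [/asboolP mA|_]; last by rewrite lexx ler01.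
by rewrite fine_ge0 ?measure_ge0 //= -lee_fin fineK ?fin_num_measure ?probability_le1.
Qed.

Lemma prob_valuesE mu A : measurable (A : set (borel X)) ->
  (prob_values mu A)%:E = mu A.
Proof. by move=> mA; rewrite /prob_values asboolT // fineK ?fin_num_measure. Qed.
End borel_probability.

Section probability_cluster.
Context (R : realType) (X : ptopologicalType) (I : Type) (F : set_system I)
  {FF : ProperFilter F}.
Variable mu : I -> probability (borel X) R.
Local Notation RT := (@prod_topology (set X) (fun=> R)).
Variable l : RT.
Hypothesis l_cluster :
  cluster ((fun i => prob_values (mu i) : RT) @ F) l.

Implicit Types A B : set (borel X).

Lemma prob_limit_monotone A B : measurable A -> measurable B -> A `<=` B ->
  l A <= l B.
Proof.
move=> mA mB AB; rewrite -subr_ge0.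
have := cluster_sum_ge (s := [:: B]) (t := [:: A]) (c := 0) l_cluster.
rewrite !big_seq1; apply; apply: filterE => i.
by rewrite !big_seq1 subr_ge0 -lee_fin !prob_valuesE ?le_prob.
Qed.

Lemma prob_limit_additive A B : measurable A -> measurable B -> A `&` B = set0 ->
  l (A `|` B) = l A + l B.
Proof.
move=> mA mB AB0; apply/eqP; rewrite -subr_eq0; apply/eqP.
have := cluster_sum_eq (s := [:: A `|` B]) (t := [:: A; B]) (c := 0) l_cluster.
rewrite !big_cons !big_nil !addr0; apply; apply: filterE => i.
rewrite !big_cons !big_nil !addr0; apply/eqP; rewrite subr_eq0; apply/eqP/EFin_inj.
by rewrite EFinD !prob_valuesE ?measureU //; exact: measurableU.
Qed.

Lemma prob_limit_subadditive A B : measurable A -> measurable B ->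
  l (A `|` B) <= l A + l B.
Proof.
move=> mA mB; rewrite -subr_ge0.
have := cluster_sum_ge (s := [:: A; B]) (t := [:: A `|` B]) (c := 0) l_cluster.
rewrite !big_cons !big_nil !addr0; apply; apply: filterE => i.
rewrite !big_cons !big_nil !addr0 subr_ge0 -lee_fin EFinD.
by rewrite !prob_valuesE ?measureU2 //; exact: measurableU.
Qed.

Lemma prob_limit_setT : l setT = 1.
Proof.
have := cluster_sum_eq (s := [:: setT]) (t := [::]) (c := 1) l_cluster.
rewrite big_seq1 big_nil subr0; apply; apply: filterE => i.
rewrite big_seq1 big_nil subr0; apply: EFin_inj.
by rewrite prob_valuesE ?probability_setT.
Qed.

Lemma prob_limit_ge A c : measurable A ->
  (\forall i \near F, c%:E <= mu i A)%E -> c <= l A.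
Proof.
move=> mA muA; rewrite -[l A]subr0.
have := cluster_sum_ge (s := [:: A]) (t := [::]) (c := c) l_cluster.
rewrite big_seq1 big_nil; apply; apply: filterS muA => i.
by rewrite big_seq1 big_nil subr0 -lee_fin prob_valuesE.
Qed.

Lemma prob_limit_preimage (h : X -> X) A :
  measurable A -> measurable (h @^-1` A : set (borel X)) ->
  (\forall i \near F, invariant_prob h (mu i)) -> l (h @^-1` A) = l A.
Proof.
move=> mA mhA inv; apply/eqP; rewrite -subr_eq0; apply/eqP.
have := cluster_sum_eq (s := [:: h @^-1` A]) (t := [:: A]) (c := 0) l_cluster.
rewrite !big_seq1; apply; apply: filterS inv => i inv.
rewrite !big_seq1; apply/eqP; rewrite subr_eq0; apply/eqP/EFin_inj.
by rewrite !prob_valuesE ?inv.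
Qed.
End probability_cluster.

Section open_nbhs_net.
Context (X : ptopologicalType) (C : set X).

Definition open_nbhs_net : set_system (set X) :=
  filter_from [set W | open W /\ C `<=` W]
    (fun W => [set W' | open W' /\ C `<=` W' /\ W' `<=` W]).

Lemma open_nbhs_net_proper : ProperFilter open_nbhs_net.
Proof.
apply: filter_from_proper; last by move=> W [oW CW]; exists W; split=> //; split.
apply: filter_from_filter; first by exists setT; split => //; exact: openT.
move=> W1 W2 [oW1 CW1] [oW2 CW2]; exists (W1 `&` W2).
  by split; [exact: openI|rewrite subsetI].
by move=> W [oW [CW]]; rewrite subsetI => -[W1W W2W].
Qed.

Lemma open_nbhs_netT (P : set X -> Prop) :
  (forall W, open W -> C `<=` W -> P W) -> \forall W \near open_nbhs_net, P W.
Proof.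
by move=> HP; exists setT; [split=> //; exact: openT|move=> W [oW [CW _]]; exact: HP].
Qed.
End open_nbhs_net.

Lemma closed_boundary (X : ptopologicalType) (A : set X) : closed (boundary A).
Proof.
by apply: closedI; [exact: closed_closure|rewrite closedC; exact: open_interior].
Qed.

Section small_boundary.
Context (R : realType) (X : ptopologicalType) (h g : X -> X).
Hypotheses (X_compact : compact [set: X]) (hom : is_homeo h g) (tsbp : TSBP h g).

Lemma tsbp_shrink (K U : set X) : closed K -> open U -> K `<=` U ->
  exists V, [/\ open V, K `<=` V, closure V `<=` U & topo_small h g (boundary V)].
Proof.
move=> cK oU KU.
have cnU : closed (~` U) by rewrite closedC.
have KnU : K `&` ~` U = set0 by apply/disjoints_subset; rewrite setCK.
have [V [V' [[oV _] KV nUV' clVV' sV]]] := tsbp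
  (subclosed_compact cK X_compact (subsetT _))
  (subclosed_compact cnU X_compact (subsetT _)) KnU.
exists V; split => // x clVx; apply: contrapT => nUx.
have : (closure V `&` closure V') x by split => //; exact/subset_closure/nUV'.
by rewrite clVV'.
Qed.

Lemma closed_cover2_split (K W1 W2 : set X) : closed K -> open W1 -> open W2 ->
  K `<=` W1 `|` W2 -> exists K1 K2 : set X, [/\ closed K1, closed K2,
    K1 `<=` W1, K2 `<=` W2 & K = K1 `|` K2].
Proof.
move=> cK oW1 oW2 KW.
have cKW2 : closed (K `&` ~` W2) by apply: closedI => //; rewrite closedC.
have KW2W1 : K `&` ~` W2 `<=` W1 by move=> x [/KW[]].
have [V [oV KW2V clVW1 _]] := tsbp_shrink cKW2 oW1 KW2W1.
exists (K `&` closure V), (K `&` ~` V); split.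
- exact: closedI cK (@closed_closure _ V).
- by apply: closedI => //; rewrite closedC.
- by move=> x [_ /clVW1].
- by move=> x [Kx nVx]; apply: contrapT => nW2x; exact/nVx/KW2V.
- apply/seteqP; split=> [x Kx|x [[]|[]]] //.
  by have [Vx|nVx] := pselect (V x); [left; split=> //; exact: subset_closure|right].
Qed.

Local Open Scope ereal_scope.

Lemma invariant_prob_charging (C : set X) (e : R) : closed C ->
  (forall W, open W -> C `<=` W -> exists2 mu : probability (borel X) R,
     invariant_prob h mu & e%:E <= mu W) ->
  exists2 nu : probability (borel X) R, invariant_prob h nu & e%:E <= nu C.
Proof.
move=> cC heavy.
have [mu Hmu] : {mu : set X -> probability (borel X) R & forall W, open W -> C `<=` W ->
    invariant_prob h (mu W) /\ e%:E <= mu W W}.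
  apply: (@choice _ _ (fun W m => open W -> C `<=` W ->
    invariant_prob h m /\ e%:E <= m W)) => W.
  have [[oW CW]|nW] := pselect (open W /\ C `<=` W).
    by have [m im eW] := heavy W oW CW; exists m.
  by have [m _ _] := heavy setT openT (subsetT C); exists m => oW CW; exfalso; exact: nW.
have FF := open_nbhs_net_proper C.
have [l l_cluster] := cluster_point_exists (F := open_nbhs_net C)
  (fun W => @prob_values01 _ _ (mu W)).
have closed_mb := @closed_measurable_borel X.
have l_monotone A B : closed A -> closed B -> A `<=` B -> (l A <= l B)%R.
  by move=> /closed_mb mA /closed_mb mB; exact: (prob_limit_monotone l_cluster mA mB).
have l_additive A B : closed A -> closed B -> A `&` B = set0 ->
    l (A `|` B) = (l A + l B)%R.
  by move=> /closed_mb mA /closed_mb mB; exact: (prob_limit_additive l_cluster mA mB).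
have l_subadditive A B : closed A -> closed B -> (l (A `|` B) <= l A + l B)%R.
  by move=> /closed_mb mA /closed_mb mB; exact: (prob_limit_subadditive l_cluster mA mB).
have l_setT : l setT = 1%R by exact: (prob_limit_setT l_cluster).
pose nu := content_prob X_compact l_monotone l_additive l_subadditive l_setT
  closed_cover2_split.
exists nu.
  apply: content_prob_invariant hom _ => K cK.
  have chK : closed (h @^-1` K).
    by apply: preimage_closed => // x _; case: hom => _ [_ []].
  apply: (prob_limit_preimage l_cluster (closed_mb _ cK) (closed_mb _ chK)).
  by apply: open_nbhs_netT => W oW CW; case: (Hmu W oW CW).
apply: content_prob_ge => W oW CW.
have [V [oV CV clVW _]] := tsbp_shrink cC oW CW.
exists (closure V); first by split; [exact: closed_closure|].
apply: (prob_limit_ge l_cluster (closed_mb _ (@closed_closure _ V))).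
exists V => // W' [oW' [CW' W'V]] /=; have [_ eW'] := Hmu W' oW' CW'.
apply: le_trans eW' (le_prob _ _ _ _).
- exact: open_measurable_borel.
- exact: closed_mb (@closed_closure _ V).
- by move=> x /W'V; exact: subset_closure.
Qed.

Lemma universally_null_uniformly_small (C : set X) (e : R) : closed C ->
  universally_null R h C -> (0 < e)%R ->
  exists W, [/\ open W, C `<=` W & forall mu : probability (borel X) R,
    invariant_prob h mu -> mu W < e%:E].
Proof.
move=> cC [_ Cnull] e0; apply: contrapT => noW.
have [nu inu] : exists2 nu : probability (borel X) R, invariant_prob h nu & e%:E <= nu C.
  apply: invariant_prob_charging cC _ => W oW CW.
  apply: contrapT => nmu; apply: noW; exists W; split => // mu imu.
  by rewrite ltNge; apply/negP => emu; apply: nmu; exists mu.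
by rewrite Cnull // lee_fin leNgt e0.
Qed.

Lemma open_small_boundary_approx (U : set X) (e : R) : (0 < e)%R -> open U ->
  universally_null R h (boundary U) ->
  exists V, [/\ open V, closure V `<=` U, topo_small h g (boundary V) &
    forall mu : probability (borel X) R, invariant_prob h mu ->
      mu (U `\` closure V : set (borel X)) < e%:E].
Proof.
move=> e0 oU nU.
have [W [oW bUW Wsmall]] := universally_null_uniformly_small (@closed_boundary _ U) nU e0.
have cK : closed (closure U `&` ~` W).
  by apply: closedI; [exact: closed_closure|rewrite closedC].
have KU : closure U `&` ~` W `<=` U.
  move=> x [clUx nWx]; apply: interior_subset; apply: contrapT => nUx.
  exact/nWx/bUW.
have [V [oV KV clVU sV]] := tsbp_shrink cK oU KU.
exists V; split => // mu imu; apply: le_lt_trans (Wsmall mu imu).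
apply: le_prob.
- exact: open_setD_closed_measurable oU (@closed_closure _ V).
- exact: open_measurable_borel.
- move=> x [Ux nclVx]; apply: contrapT => nWx; apply: nclVx.
  by apply/subset_closure/KV; split => //; exact: subset_closure.
Qed.

Lemma closed_small_boundary_approx (U F : set X) (e : R) : (0 < e)%R -> open U ->
  closed F -> F `<=` U -> universally_null R h (boundary F) ->
  exists V, [/\ open V, F `<=` V, closure V `<=` U, topo_small h g (boundary V) &
    forall mu : probability (borel X) R, invariant_prob h mu ->
      mu (V `\` F : set (borel X)) < e%:E].
Proof.
move=> e0 oU cF FU nF.
have [W [oW bFW Wsmall]] := universally_null_uniformly_small (@closed_boundary _ F) nF e0.
have oO : open (U `&` (interior F `|` W)).
  by apply: openI => //; apply: openU => //; exact: open_interior.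
have FO : F `<=` U `&` (interior F `|` W).
  move=> x Fx; split; first exact: FU.
  have [iFx|niFx] := pselect (interior F x); [by left|right].
  by apply: bFW; split => //; exact: subset_closure.
have [V [oV FV clVO sV]] := tsbp_shrink cF oO FO.
exists V; split => //; first by move=> x /clVO [].
move=> mu imu; apply: le_lt_trans (Wsmall mu imu); apply: le_prob.
- exact: open_setD_closed_measurable.
- exact: open_measurable_borel.
- by move=> x [Vx nFx]; case: (clVO x (subset_closure Vx)) => _ [/interior_subset|].
Qed.
End small_boundary.

Unset Implicit Arguments.
Theorem corollary4p10 (R : realType) (X : pseudoPMetricType R) (h g : X -> X)
  (eps : R) :
  hausdorff_space X -> compact [set: X] -> infinite_set [set: X] ->
  is_homeo h g -> minimal_homeo h g -> TSBP h g -> 0 < eps ->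
  (* (1) *)
  (forall U : set X, open U -> universally_null R h (boundary U) ->
     exists V : set X, [/\ open V, closure V `<=` U, topo_small h g (boundary V) &
       forall mu : probability (borel X) R, invariant_prob h mu ->
         (mu (U `\` closure V : set (borel X)) < eps%:E)%E]) /\
  (* (2) *)
  (forall U F : set X, open U -> closed F -> F `<=` U ->
     universally_null R h (boundary F) ->
     exists V : set X, [/\ open V, F `<=` V, closure V `<=` U,
       topo_small h g (boundary V) &
       forall mu : probability (borel X) R, invariant_prob h mu ->
         (mu (V `\` F : set (borel X)) < eps%:E)%E]) /\
  (* (3) *)
  (forall F : set X, closed F -> universally_null R h (boundary F) ->
     exists V : set X, [/\ open V, F `<=` V, topo_small h g (boundary V) &
       forall mu : probability (borel X) R, invariant_prob h mu ->
         (mu (V `\` F : set (borel X)) < eps%:E)%E]).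
Proof.
move=> _ X_compact _ hom _ tsbp eps_gt0; split; [|split].
- move=> U oU nU.
  exact: (open_small_boundary_approx X_compact hom tsbp eps_gt0 oU nU).
- move=> U F oU cF FU nF.
  exact: (closed_small_boundary_approx X_compact hom tsbp eps_gt0 oU cF FU nF).
- move=> F cF nF.
  have [V [oV FV _ sV small]] := closed_small_boundary_approx
    X_compact hom tsbp eps_gt0 openT cF (subsetT F) nF.
  by exists V.
Qed.
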